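(* Let $G_1=(\{p_j\},\{\mu_j\},\{\sigma_j^2\})_{j=1}^n$ and $G_2=(\{p'_k\},\{\mu'_k\},\{\sigma_k'^2\})_{k=1}^{n'}$ be univariate Gaussian mixtures with all $\sigma_j>0$ and $\sigma'_k>0$, and let $L=C_2^2(G_1,G_2)$, regarded as a function of the parameters $\mu_1,\dots,\mu_n,\sigma_1,\dots,\sigma_n$ of $G_1$ (with $G_2$ and $\{p_j\}$ fixed). Then for every $j=1,\dots,n$, $$\left|\frac{\partial L}{\partial\mu_j}\right|\le 4,\qquad \left|\frac{\partial L}{\partial\sigma_j}\right|\le 4.$$ In particular $L$ is globally Lipschitz in $\{\mu_j\}$ and $\{\sigma_j\}$.
   Context: A univariate Gaussian mixture $G=(\{p_j\},\{\mu_j\},\{\sigma_j^2\})_{j=1}^n$ has $p_j\ge0$, $\sum_jp_j=1$, $\mu_j\in\mathbb{R}$, $\sigma_j>0$, and CDF $\sum_jp_j\Phi((x-\mu_j)/\sigma_j)$, with $\Phi$ the standard normal CDF. The Cramér 2-distance is $C_2(G_1,G_2)=\left(\int_{\mathbb{R}}|\mathrm{CDF}(G_1)-\mathrm{CDF}(G_2)|^2dx\right)^{1/2}$. *)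

From Stdlib Require Import Reals Lra Lia.
From Coquelicot Require Import Coquelicot.
Open Scope R_scope.

Definition std_normal_pdf (x : R) : R := exp (- (x ^ 2) / 2) / sqrt (2 * PI).
Definition Phi (x : R) : R :=
  RInt_gen std_normal_pdf (Rbar_locally m_infty) (at_point x).

Fixpoint sumR (n : nat) (f : nat -> R) : R :=
  match n with
  | O => 0
  | S k => sumR k f + f k
  end.

(* A mixture with n components is given by weights p, means mu, std devs sigma
   (only indices 0..n-1 are used). *)
Definition is_gmixture (n : nat) (p mu sigma : nat -> R) : Prop :=
  (forall j, (j < n)%nat -> 0 <= p j) /\ sumR n p = 1 /\
  (forall j, (j < n)%nat -> 0 < sigma j).

Definition mixture_cdf (n : nat) (p mu sigma : nat -> R) (x : R) : R :=
  sumR n (fun j => p j * Phi ((x - mu j) / sigma j)).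

Definition cramer2_sq (n : nat) (p mu sigma : nat -> R)
                      (n' : nat) (p' mu' sigma' : nat -> R) : R :=
  RInt_gen (fun x => (mixture_cdf n p mu sigma x - mixture_cdf n' p' mu' sigma' x) ^ 2)
           (Rbar_locally m_infty) (Rbar_locally p_infty).

Definition upd (f : nat -> R) (j : nat) (v : R) : nat -> R :=
  fun i => if Nat.eq_dec i j then v else f i.

(* Let F1, F2 be the two mixture CDFs, D = F1 - F2 and L = ∫ D².  Changing the
   mean or the scale of component j of G1 to the value a changes F1 by
   q * u_a(x), where q = p_j and u_a = Φ(ψ_a) - Φ(ψ_{a0}) for the affine
   standardisation ψ.  As |D| <= M := ∫ φ, differentiation under the integral
   sign gives  ∂L = ∫ 2 D q d  and  |∂L| <= 2 M q ∫ |d|,  where d is the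
   derivative of u_a in a: for the mean d = -φ(w)/σ with ∫|d| = M, for the scale
   d = -w φ(w)/σ with ∫|d| = 2 φ(0), where w = (x - μ)/σ.  Since M² <= 2e/π <= 2
   and φ(0) <= 1/2, both partial derivatives are bounded by 4; the Lipschitz bounds then follow from the mean value theorem. *)

From Stdlib Require Import Reals Lra Lia Classical_Prop FunctionalExtensionality.
From Coquelicot Require Import Coquelicot.
Open Scope R_scope.

Notation minus_infty := (Rbar_locally m_infty) (only parsing).
Notation plus_infty := (Rbar_locally p_infty) (only parsing).

(* The filters used below are proper, so improper integrals have unique values. *)
#[local] Instance Rbar_locally_proper (x : Rbar) : ProperFilter' (Rbar_locally x).
Proof. apply Proper_StrongProper, Rbar_locally_filter. Qed.

#[local] Instance at_point_proper (x : R) : ProperFilter' (at_point x).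
Proof. apply Proper_StrongProper, at_point_filter. Qed.

Lemma RInt_gen_of_is {Fa Fb : (R -> Prop) -> Prop}
    {FFa : ProperFilter' Fa} {FFb : ProperFilter' Fb} (f : R -> R) l :
  is_RInt_gen f Fa Fb l -> RInt_gen f Fa Fb = l.
Proof. apply (is_RInt_gen_unique (V := R_CompleteNormedModule)). Qed.

Definition continuous_on_R (f : R -> R) : Prop := forall x, continuous f x.

Lemma continuous_on_R_ext f g : (forall x, f x = g x) -> continuous_on_R f -> continuous_on_R g.
Proof. intros E H x. apply (continuous_ext f g); auto. Qed.

Lemma continuous_on_R_const c : continuous_on_R (fun _ => c).
Proof. intros x. apply continuous_const. Qed.

Lemma continuous_on_R_plus f g :
  continuous_on_R f -> continuous_on_R g -> continuous_on_R (fun x => f x + g x).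
Proof. intros Hf Hg x. apply (continuous_plus (V := R_NormedModule) f g); auto. Qed.

Lemma continuous_on_R_minus f g :
  continuous_on_R f -> continuous_on_R g -> continuous_on_R (fun x => f x - g x).
Proof. intros Hf Hg x. apply (continuous_minus (V := R_NormedModule) f g); auto. Qed.

Lemma continuous_on_R_mult f g :
  continuous_on_R f -> continuous_on_R g -> continuous_on_R (fun x => f x * g x).
Proof. intros Hf Hg x. apply (continuous_mult (K := R_AbsRing) f g); auto. Qed.

Lemma continuous_on_R_comp f g :
  continuous_on_R f -> continuous_on_R g -> continuous_on_R (fun x => g (f x)).
Proof. intros Hf Hg x. apply continuous_comp; auto. Qed.

Lemma continuous_on_R_abs f : continuous_on_R f -> continuous_on_R (fun x => Rabs (f x)).
Proof. intros Hf x. apply continuous_Rabs_comp; auto. Qed.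

Lemma continuous_on_R_of_derive (f df : R -> R) :
  (forall x, is_derive f x (df x)) -> continuous_on_R f.
Proof.
  intros H x. apply (ex_derive_continuous (K := R_AbsRing) (V := R_NormedModule)).
  exists (df x). apply H.
Qed.

Lemma continuous_on_R_affine (m s : R) : continuous_on_R (fun x => (x - m) / s).
Proof. apply (continuous_on_R_of_derive _ (fun _ => / s)). intros x. auto_derive; auto; ring. Qed.

Lemma ball_R (l z e : R) : ball l e z <-> Rabs (z - l) < e.
Proof. unfold ball; simpl; unfold AbsRing_ball, abs, minus, plus, opp; simpl. tauto. Qed.

Lemma Rabs_le_between a b : Rabs a <= b -> - b <= a <= b.
Proof. unfold Rabs; destruct Rcase_abs; lra. Qed.

Lemma exp_le x y : x <= y -> exp x <= exp y.
Proof. intros [H | ->]; [left; apply exp_increasing; auto | lra]. Qed.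

Lemma ex_RInt_continuous_on_R f a b : continuous_on_R f -> ex_RInt f a b.
Proof. intros H. apply (ex_RInt_continuous (V := R_CompleteNormedModule)); intros; apply H. Qed.

Lemma RInt_Chasles_R f a b c :
  continuous_on_R f -> RInt f a b + RInt f b c = RInt f a c.
Proof.
  intros H. apply (RInt_Chasles (V := R_CompleteNormedModule)); apply ex_RInt_continuous_on_R; auto.
Qed.

Lemma RInt_antiderivative (h H : R -> R) a b :
  continuous_on_R h -> (forall x, is_derive H x (h x)) -> RInt h a b = H b - H a.
Proof.
  intros Hc Hd. apply is_RInt_unique.
  apply (is_RInt_derive (V := R_CompleteNormedModule)); intros; auto.
Qed.

Lemma RInt_ge0_R f a b : a <= b -> continuous_on_R f ->
  (forall x, a <= x <= b -> 0 <= f x) -> 0 <= RInt f a b.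
Proof.
  intros Hab Hc Hf. apply RInt_ge_0; auto. apply ex_RInt_continuous_on_R; auto.
  intros x Hx; apply Hf; lra.
Qed.

Lemma is_RInt_gen_left_of_eps (f : R -> R) b l : continuous_on_R f ->
  (forall eps, 0 < eps -> exists M, forall a, a < M -> Rabs (RInt f a b - l) < eps) ->
  is_RInt_gen f minus_infty (at_point b) l.
Proof.
  intros Hc H. apply (proj2 (filterlimi_locally _ _)). intros eps.
  destruct (H eps (cond_pos eps)) as [M HM].
  apply (Filter_prod _ _ _ (fun a => a < M) (fun c => c = b));
    [exists M; auto | reflexivity |].
  intros a c Ha ->. exists (RInt f a b). split.
  - apply (RInt_correct (V := R_CompleteNormedModule)), ex_RInt_continuous_on_R, Hc.
  - apply ball_R, HM, Ha.
Qed.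

Lemma is_RInt_gen_right_of_eps (f : R -> R) b l : continuous_on_R f ->
  (forall eps, 0 < eps -> exists M, forall a, M < a -> Rabs (RInt f b a - l) < eps) ->
  is_RInt_gen f (at_point b) plus_infty l.
Proof.
  intros Hc H. apply (proj2 (filterlimi_locally _ _)). intros eps.
  destruct (H eps (cond_pos eps)) as [M HM].
  apply (Filter_prod _ _ _ (fun c => c = b) (fun a => M < a));
    [reflexivity | exists M; auto |].
  intros c a -> Ha. exists (RInt f b a). split.
  - apply (RInt_correct (V := R_CompleteNormedModule)), ex_RInt_continuous_on_R, Hc.
  - apply ball_R, HM, Ha.
Qed.

Lemma RInt_le_is_RInt_gen (g : R -> R) lg a b :
  continuous_on_R g -> (forall x, 0 <= g x) -> a <= b ->
  is_RInt_gen g minus_infty plus_infty lg -> RInt g a b <= lg.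
Proof.
  intros Hc Hg Hab HI. apply Rnot_lt_le. intros Hlt.
  assert (Heps : 0 < RInt g a b - lg) by lra.
  destruct (proj1 (filterlimi_locally _ _) HI (mkposreal _ Heps))
    as [P Q [M1 HP] [M2 HQ] HPQ].
  set (a' := Rmin a (M1 - 1)). set (b' := Rmax b (M2 + 1)).
  assert (a' <= a /\ a' < M1) as [Ha1 Ha2] by (unfold a', Rmin; destruct Rle_dec; lra).
  assert (b <= b' /\ M2 < b') as [Hb1 Hb2] by (unfold b', Rmax; destruct Rle_dec; lra).
  destruct (HPQ a' b' (HP a' Ha2) (HQ b' Hb2)) as [y [Hy Hball]].
  apply ball_R in Hball; simpl in Hball.
  simpl in Hy. rewrite <- (is_RInt_unique _ _ _ _ Hy) in Hball.
  rewrite <- (RInt_Chasles_R g a' a b'), <- (RInt_Chasles_R g a b b') in Hball by auto.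
  assert (0 <= RInt g a' a) by (apply RInt_ge0_R; auto).
  assert (0 <= RInt g b b') by (apply RInt_ge0_R; auto).
  apply Rabs_def2 in Hball. unfold minus, plus, opp in Hball; simpl in Hball. lra.
Qed.

(* A nonnegative function with bounded partial integrals is integrable on a
   half-line; the limit is the supremum of the partial integrals. *)
Lemma monotone_integral_left (f : R -> R) b B : continuous_on_R f ->
  (forall x, x <= b -> 0 <= f x) -> (forall a, a <= b -> RInt f a b <= B) ->
  exists l, is_RInt_gen f minus_infty (at_point b) l /\ 0 <= l <= B.
Proof.
  intros Hc Hf HB.
  set (E := fun y => exists a, a <= b /\ y = RInt f a b).
  assert (HE0 : E 0).
  { exists b. split; [lra | symmetry; apply (RInt_point (V := R_CompleteNormedModule))]. }
  destruct (completeness E) as [l [Hub Hlub]].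
  { exists B. intros y [a [Ha ->]]. auto. }
  { exists 0; auto. }
  exists l. split.
  2: { split; [apply Hub; auto | apply Hlub; intros y [a [Ha ->]]; auto]. }
  apply is_RInt_gen_left_of_eps; auto. intros eps Heps.
  assert (exists a0, a0 <= b /\ l - eps < RInt f a0 b) as [a0 [Ha0 Hl0]].
  { apply NNPP. intros Hn. assert (l <= l - eps); [| lra].
    apply Hlub. intros y [a [Ha ->]]. apply Rnot_lt_le. intros Hlt. apply Hn. eauto. }
  exists a0. intros a Ha.
  assert (RInt f a b <= l) by (apply Hub; exists a; split; [lra | auto]).
  rewrite <- (RInt_Chasles_R f a a0 b Hc) in *.
  assert (0 <= RInt f a a0) by (apply RInt_ge0_R; [lra | auto | intros; apply Hf; lra]).
  apply Rabs_def1; lra.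
Qed.

Lemma monotone_integral_right (f : R -> R) b B : continuous_on_R f ->
  (forall x, b <= x -> 0 <= f x) -> (forall a, b <= a -> RInt f b a <= B) ->
  exists l, is_RInt_gen f (at_point b) plus_infty l /\ 0 <= l <= B.
Proof.
  intros Hc Hf HB.
  set (E := fun y => exists a, b <= a /\ y = RInt f b a).
  assert (HE0 : E 0).
  { exists b. split; [lra | symmetry; apply (RInt_point (V := R_CompleteNormedModule))]. }
  destruct (completeness E) as [l [Hub Hlub]].
  { exists B. intros y [a [Ha ->]]. auto. }
  { exists 0; auto. }
  exists l. split.
  2: { split; [apply Hub; auto | apply Hlub; intros y [a [Ha ->]]; auto]. }
  apply is_RInt_gen_right_of_eps; auto. intros eps Heps.
  assert (exists a0, b <= a0 /\ l - eps < RInt f b a0) as [a0 [Ha0 Hl0]].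
  { apply NNPP. intros Hn. assert (l <= l - eps); [| lra].
    apply Hlub. intros y [a [Ha ->]]. apply Rnot_lt_le. intros Hlt. apply Hn. eauto. }
  exists a0. intros a Ha.
  assert (RInt f b a <= l) by (apply Hub; exists a; split; [lra | auto]).
  rewrite <- (RInt_Chasles_R f b a0 a Hc) in *.
  assert (0 <= RInt f a0 a) by (apply RInt_ge0_R; [lra | auto | intros; apply Hf; lra]).
  apply Rabs_def1; lra.
Qed.

Lemma RInt_gen_abs_le (f g : R -> R) lf lg : (forall x, Rabs (f x) <= g x) ->
  is_RInt_gen f minus_infty plus_infty lf -> is_RInt_gen g minus_infty plus_infty lg ->
  Rabs lf <= lg.
Proof.
  intros H Hf Hg.
  apply (@RInt_gen_norm R_CompleteNormedModule minus_infty plus_infty _ _ f g lf lg);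
    [| | exact Hf | exact Hg].
  - apply (Filter_prod _ _ _ (fun a => a < 0) (fun b => 0 < b));
      [exists 0; auto | exists 0; auto | simpl; intros; lra].
  - apply filter_forall. intros; apply H.
Qed.

(* Proof: f + g lies between 0 and 2g. *)
Lemma dominated_integrable (f g : R -> R) lg :
  continuous_on_R f -> continuous_on_R g -> (forall x, Rabs (f x) <= g x) ->
  is_RInt_gen g minus_infty plus_infty lg ->
  exists l, is_RInt_gen f minus_infty plus_infty l /\ Rabs l <= lg.
Proof.
  intros Hf Hg Hfg HG.
  assert (Hg0 : forall x, 0 <= g x) by (intros x; eapply Rle_trans; [apply Rabs_pos | apply Hfg]).
  set (h := fun x => f x + g x).
  assert (Hh : continuous_on_R h) by (apply continuous_on_R_plus; auto).
  assert (Hh0 : forall x, 0 <= h x <= 2 * g x)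
    by (intros x; pose proof (Rabs_le_between _ _ (Hfg x)); unfold h; lra).
  assert (Hpartial : forall a b, a <= b -> RInt h a b <= 2 * lg).
  { intros a b Hab. apply Rle_trans with (RInt (fun x => 2 * g x) a b).
    - apply RInt_le; auto; try apply ex_RInt_continuous_on_R; auto.
      + apply continuous_on_R_mult; auto using continuous_on_R_const.
      + intros x _; apply Hh0.
    - change (RInt (fun x => scal 2 (g x)) a b <= 2 * lg).
      rewrite (RInt_scal (V := R_CompleteNormedModule)) by (apply ex_RInt_continuous_on_R; auto).
      pose proof (RInt_le_is_RInt_gen g lg a b Hg Hg0 Hab HG). unfold scal; simpl.
      unfold mult; simpl. lra. }
  destruct (monotone_integral_left h 0 (2 * lg)) as [l1 [H1 _]]; auto.
  { intros x _; apply Hh0. }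
  destruct (monotone_integral_right h 0 (2 * lg)) as [l2 [H2 _]]; auto.
  { intros x _; apply Hh0. }
  pose proof (is_RInt_gen_Chasles (V := R_NormedModule) h 0 l1 l2 H1 H2) as Hfull.
  pose proof (is_RInt_gen_minus (V := R_NormedModule) _ _ _ _ Hfull HG) as Hdiff.
  assert (Hint : is_RInt_gen f minus_infty plus_infty (minus (plus l1 l2) lg)).
  { apply (is_RInt_gen_ext (fun y => minus (h y) (g y))); [| exact Hdiff].
    apply filter_forall. intros _ x _. unfold h, minus, plus, opp; simpl. ring. }
  exists (minus (plus l1 l2) lg). split; [exact Hint |].
  apply (RInt_gen_abs_le f g _ lg Hfg); auto.
Qed.

Lemma is_RInt_gen_antiderivative {Fa Fb : (R -> Prop) -> Prop}
    {FFa : Filter Fa} {FFb : Filter Fb} (h H : R -> R) la lb :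
  continuous_on_R h -> (forall x, is_derive H x (h x)) ->
  filterlim H Fa (locally la) -> filterlim H Fb (locally lb) ->
  is_RInt_gen h Fa Fb (lb - la).
Proof.
  intros Hc Hd Ha Hb.
  assert (HD : forall x, Derive H x = h x) by (intros; apply is_derive_unique, Hd).
  apply (is_RInt_gen_ext (Derive H)).
  { apply filter_forall. intros _ x _. apply HD. }
  apply is_RInt_gen_Derive; auto; apply filter_forall; intros _ x _.
  - exists (h x). apply Hd.
  - apply (continuous_ext h); [intros; symmetry; apply HD | apply Hc].
Qed.

Lemma filterlim_at_point (H : R -> R) c : filterlim H (at_point c) (locally (H c)).
Proof. intros P HP. exact (locally_singleton _ P HP). Qed.

Lemma is_RInt_gen_ext_left (f g : R -> R) c l : (forall x, x < c -> f x = g x) ->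
  is_RInt_gen f minus_infty (at_point c) l -> is_RInt_gen g minus_infty (at_point c) l.
Proof.
  intros E. apply is_RInt_gen_ext.
  apply (Filter_prod _ _ _ (fun a => a < c) (fun b => b = c)); [exists c; auto | reflexivity |].
  intros a b Ha -> x [_ Hx]. simpl in Hx. apply E.
  unfold Rmax in Hx; destruct Rle_dec; lra.
Qed.

Lemma is_RInt_gen_ext_right (f g : R -> R) c l : (forall x, c < x -> f x = g x) ->
  is_RInt_gen f (at_point c) plus_infty l -> is_RInt_gen g (at_point c) plus_infty l.
Proof.
  intros E. apply is_RInt_gen_ext.
  apply (Filter_prod _ _ _ (fun a => a = c) (fun b => c < b)); [reflexivity | exists c; auto |].
  intros a b -> Hb x [Hx _]. simpl in Hx. apply E.
  unfold Rmin in Hx; destruct Rle_dec; lra.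
Qed.

(* The Laplace kernel exp(-|x - c|/s): the integrable envelope used for all
   tail estimates. *)
Definition laplace (c s x : R) : R := exp (- (Rabs (x - c) / s)).

Lemma laplace_bounds c s x : 0 < s -> 0 < laplace c s x <= 1.
Proof.
  intros Hs. unfold laplace. split; [apply exp_pos |]. rewrite <- exp_0.
  apply exp_le. pose proof (Rabs_pos (x - c)).
  assert (0 <= Rabs (x - c) / s) by (apply Rdiv_le_0_compat; lra). lra.
Qed.

Lemma laplace_continuous c s : continuous_on_R (laplace c s).
Proof.
  unfold laplace. apply (continuous_on_R_comp _ exp).
  - apply (continuous_on_R_ext (fun x => Rabs (x - c) * (- / s))); [intros; unfold Rdiv; ring |].
    apply continuous_on_R_mult; [| apply continuous_on_R_const].
    apply continuous_on_R_abs, (continuous_on_R_of_derive _ (fun _ => 1)).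
    intros x. auto_derive; auto; ring.
  - intros x. apply continuous_exp.
Qed.

Lemma laplace_small c s K eps x : 0 < s -> 0 < eps ->
  - (s * ln (eps / (Rabs K + 1))) < Rabs (x - c) -> K * laplace c s x < eps.
Proof.
  intros Hs He Hx. pose proof (Rabs_pos K) as HK.
  assert (Hq : 0 < eps / (Rabs K + 1)) by (apply Rdiv_lt_0_compat; lra).
  assert (Hlt : laplace c s x < eps / (Rabs K + 1)).
  { unfold laplace. rewrite <- (exp_ln _ Hq). apply exp_increasing.
    apply Rmult_lt_reg_l with s; auto. unfold Rdiv. field_simplify; lra. }
  pose proof (laplace_bounds c s x Hs).
  apply Rle_lt_trans with ((Rabs K + 1) * laplace c s x).
  - pose proof (Rle_abs K). nra.
  - apply Rmult_lt_reg_l with (/ (Rabs K + 1)); [apply Rinv_0_lt_compat; lra |].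
    rewrite <- Rmult_assoc, Rinv_l by lra. unfold Rdiv in Hlt. lra.
Qed.

Lemma filterlim_m_infty_of_laplace (H : R -> R) L K c s : 0 < s ->
  (forall x, x <= c -> Rabs (H x - L) <= K * laplace c s x) ->
  filterlim H minus_infty (locally L).
Proof.
  intros Hs HB P [eps HP].
  exists (Rmin c (c + s * ln (eps / (Rabs K + 1)))). intros x Hx.
  apply HP, ball_R. assert (x < c /\ x < c + s * ln (eps / (Rabs K + 1))) as [H1 H2]
    by (unfold Rmin in Hx; destruct Rle_dec; lra).
  eapply Rle_lt_trans; [apply HB; lra |].
  apply laplace_small; [auto | apply cond_pos |]. rewrite (Rabs_left (x - c)); lra.
Qed.

Lemma filterlim_p_infty_of_laplace (H : R -> R) L K c s : 0 < s ->
  (forall x, c <= x -> Rabs (H x - L) <= K * laplace c s x) ->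
  filterlim H plus_infty (locally L).
Proof.
  intros Hs HB P [eps HP].
  exists (Rmax c (c - s * ln (eps / (Rabs K + 1)))). intros x Hx.
  apply HP, ball_R. assert (c < x /\ c - s * ln (eps / (Rabs K + 1)) < x) as [H1 H2]
    by (unfold Rmax in Hx; destruct Rle_dec; lra).
  eapply Rle_lt_trans; [apply HB; lra |].
  apply laplace_small; [auto | apply cond_pos |]. rewrite (Rabs_right (x - c)); lra.
Qed.

Lemma laplace_integral c s : 0 < s ->
  is_RInt_gen (laplace c s) minus_infty plus_infty (2 * s).
Proof.
  intros Hs.
  assert (Hexp : forall k, continuous_on_R (fun x => exp (k * (x - c)))).
  { intros k. apply (continuous_on_R_of_derive _ (fun x => k * exp (k * (x - c)))).
    intros x. auto_derive; auto. unfold Rminus. ring. }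
  assert (HL : is_RInt_gen (laplace c s) minus_infty (at_point c) (s * exp (/ s * (c - c)) - 0)).
  { apply (is_RInt_gen_ext_left (fun x => exp (/ s * (x - c)))).
    { intros x Hx. unfold laplace. rewrite Rabs_left by lra. f_equal. field. lra. }
    apply (is_RInt_gen_antiderivative _ (fun x => s * exp (/ s * (x - c))));
      [apply Hexp | | | exact (filterlim_at_point (fun x => s * exp (/ s * (x - c))) c)].
    - intros x. auto_derive; auto. unfold Rminus. field. lra.
    - apply (filterlim_m_infty_of_laplace _ _ s c s Hs). intros x Hx.
      pose proof (laplace_bounds c s x Hs).
      replace (s * exp (/ s * (x - c)) - 0) with (s * laplace c s x).
      + rewrite Rabs_right by nra. lra.
      + unfold laplace. rewrite Rabs_left1 by lra. unfold Rdiv.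
        replace (- (- (x - c) * / s)) with (/ s * (x - c)) by ring. ring. }
  assert (HR : is_RInt_gen (laplace c s) (at_point c) plus_infty
                 (0 - (- s * exp (- / s * (c - c))))).
  { apply (is_RInt_gen_ext_right (fun x => exp (- / s * (x - c)))).
    { intros x Hx. unfold laplace. rewrite Rabs_right by lra. f_equal. field. lra. }
    apply (is_RInt_gen_antiderivative _ (fun x => - s * exp (- / s * (x - c))));
      [apply Hexp | | exact (filterlim_at_point (fun x => - s * exp (- / s * (x - c))) c) |].
    - intros x. auto_derive; auto. unfold Rminus. field. lra.
    - apply (filterlim_p_infty_of_laplace _ _ s c s Hs). intros x Hx.
      pose proof (laplace_bounds c s x Hs).
      replace (- s * exp (- / s * (x - c)) - 0) with (- (s * laplace c s x)).
      + rewrite Rabs_Ropp, Rabs_right by nra. lra.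
      + unfold laplace. rewrite Rabs_right by lra. unfold Rdiv.
        replace (- / s * (x - c)) with (- ((x - c) * / s)) by ring. ring. }
  replace (2 * s) with (plus (s * exp (/ s * (c - c)) - 0) (0 - (- s * exp (- / s * (c - c))))).
  - apply (is_RInt_gen_Chasles (V := R_NormedModule) _ c _ _ HL HR).
  - rewrite Rminus_diag, !Rmult_0_r, exp_0. unfold plus; simpl. ring.
Qed.

Lemma is_derive_of_quadratic_remainder (f : R -> R) a0 l delta C : 0 < delta ->
  (forall a, Rabs (a - a0) < delta -> Rabs (f a - f a0 - (a - a0) * l) <= C * (a - a0) ^ 2) ->
  is_derive f a0 l.
Proof.
  intros Hdelta Hrem. apply is_derive_Reals. intros eps Heps.
  set (C' := Rabs C + 1).
  assert (HC' : 0 < C') by (unfold C'; pose proof (Rabs_pos C); lra).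
  assert (Hd : 0 < Rmin delta (eps / C')) by (apply Rmin_pos; [lra | apply Rdiv_lt_0_compat; lra]).
  exists (mkposreal _ Hd). intros h Hh0 Hh. simpl in Hh.
  assert (Hh1 : Rabs h < delta) by (eapply Rlt_le_trans; [exact Hh | apply Rmin_l]).
  assert (Hh2 : Rabs h * C' < eps).
  { apply Rmult_lt_reg_r with (/ C'); [apply Rinv_0_lt_compat; lra |].
    rewrite Rmult_assoc, Rinv_r, Rmult_1_r by lra.
    eapply Rlt_le_trans; [exact Hh | apply Rmin_r]. }
  specialize (Hrem (a0 + h)). replace (a0 + h - a0) with h in Hrem by ring.
  specialize (Hrem Hh1).
  assert (Hah : 0 < Rabs h) by (apply Rabs_pos_lt; auto).
  assert (Hsq : h ^ 2 = Rabs h * Rabs h)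
    by (rewrite <- Rabs_mult, Rabs_right by (apply Rle_ge, Rle_0_sqr); ring).
  replace ((f (a0 + h) - f a0) / h - l) with ((f (a0 + h) - f a0 - h * l) / h) by (field; auto).
  unfold Rdiv. rewrite Rabs_mult, Rabs_inv.
  apply Rmult_lt_reg_r with (Rabs h); auto.
  rewrite Rmult_assoc, Rinv_l by lra.
  assert (C * h ^ 2 <= Rabs h * C' * Rabs h)
    by (rewrite Hsq; unfold C'; pose proof (Rle_abs C); nra).
  nra.
Qed.

Lemma is_derive_RInt_gen (F : R -> R -> R) (L dF k : R -> R) a0 delta l K : 0 < delta ->
  (forall a, Rabs (a - a0) < delta -> is_RInt_gen (F a) minus_infty plus_infty (L a)) ->
  is_RInt_gen dF minus_infty plus_infty l -> is_RInt_gen k minus_infty plus_infty K ->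
  (forall a x, Rabs (a - a0) < delta ->
     Rabs (F a x - F a0 x - (a - a0) * dF x) <= (a - a0) ^ 2 * k x) ->
  is_derive L a0 l.
Proof.
  intros Hdelta HF HdF Hk Hrem.
  apply (is_derive_of_quadratic_remainder L a0 l delta K Hdelta). intros a Ha.
  rewrite (Rmult_comm K).
  apply (RInt_gen_abs_le (fun x => F a x - F a0 x - (a - a0) * dF x) (fun x => (a - a0) ^ 2 * k x)).
  - intros; apply Hrem; auto.
  - assert (H0 : Rabs (a0 - a0) < delta) by (rewrite Rminus_diag, Rabs_R0; lra).
    exact (is_RInt_gen_minus (V := R_NormedModule) _ _ _ _
             (is_RInt_gen_minus (V := R_NormedModule) _ _ _ _ (HF a Ha) (HF a0 H0))
             (is_RInt_gen_scal (V := R_NormedModule) _ (a - a0) _ HdF)).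
  - exact (is_RInt_gen_scal (V := R_NormedModule) _ ((a - a0) ^ 2) _ Hk).
Qed.

Lemma lipschitz_of_derivative_bound (f : R -> R) M a b :
  (forall t, Rmin a b <= t <= Rmax a b -> exists l, is_derive f t l /\ Rabs l <= M) ->
  Rabs (f a - f b) <= M * Rabs (a - b).
Proof.
  intros Hd.
  assert (HD : forall t, Rmin a b <= t <= Rmax a b ->
                is_derive f t (Derive f t) /\ Rabs (Derive f t) <= M).
  { intros t Ht. destruct (Hd t Ht) as [l [Hl Hb]]. rewrite (is_derive_unique f t l Hl). auto. }
  rewrite Rmin_comm, Rmax_comm in HD.
  destruct (MVT_gen f b a (Derive f)) as [c [Hc ->]].
  - intros x Hx. apply HD. lra.
  - intros x Hx. apply continuity_pt_filterlim.
    apply (ex_derive_continuous (K := R_AbsRing) (V := R_NormedModule)).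
    exists (Derive f x). apply HD, Hx.
  - rewrite Rabs_mult. apply Rmult_le_compat_r; [apply Rabs_pos | apply HD, Hc].
Qed.

(* Step 2: the standard normal density φ and its CDF Φ.  φ is dominated by a
   Laplace kernel, which gives existence of Φ, exponential tails, and the
   bound φ_mass² <= 2 on the total mass. *)

Notation phi := std_normal_pdf.

Lemma sqrt_2PI_ge2 : 2 <= sqrt (2 * PI).
Proof.
  apply Rle_trans with (sqrt (2 * 2)); [rewrite sqrt_square; lra |].
  apply sqrt_le_1_alt. pose proof PI2_3_2. lra.
Qed.

Lemma phi_pos t : 0 < phi t.
Proof.
  unfold std_normal_pdf. pose proof sqrt_2PI_ge2.
  apply Rdiv_lt_0_compat; [apply exp_pos | lra].
Qed.

Lemma phi_le_gauss t : phi t <= exp (- (t ^ 2) / 2).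
Proof.
  unfold std_normal_pdf. pose proof sqrt_2PI_ge2. pose proof (exp_pos (- (t ^ 2) / 2)).
  unfold Rdiv at 1. apply Rle_trans with (exp (- (t ^ 2) / 2) * 1); [| lra].
  apply Rmult_le_compat_l; [lra |]. rewrite <- Rinv_1. apply Rinv_le_contravar; lra.
Qed.

Lemma phi_le_half t : phi t <= 1 / 2.
Proof.
  unfold std_normal_pdf. pose proof sqrt_2PI_ge2.
  assert (exp (- (t ^ 2) / 2) <= 1)
    by (rewrite <- exp_0; apply exp_le; pose proof (pow2_ge_0 t); lra).
  pose proof (exp_pos (- (t ^ 2) / 2)).
  apply Rle_trans with (1 / sqrt (2 * PI)).
  - unfold Rdiv. apply Rmult_le_compat_r; [left; apply Rinv_0_lt_compat |]; lra.
  - unfold Rdiv. rewrite !Rmult_1_l. apply Rinv_le_contravar; lra.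
Qed.

Lemma phi_deriv t : is_derive phi t (- t * phi t).
Proof.
  unfold std_normal_pdf. pose proof sqrt_2PI_ge2. auto_derive; [lra |].
  replace (- (t * (t * 1)) * / 2) with (- t ^ 2 / 2) by field. field. lra.
Qed.

Lemma phi_continuous : continuous_on_R phi.
Proof. apply (continuous_on_R_of_derive _ _ phi_deriv). Qed.

(* exp(-t²/2) <= exp(1/2) exp(-|t|), so φ is dominated by a Laplace kernel;
   the squared constant satisfies 4 c² = 2e/π <= 2. *)
Definition phi_exp_const : R := exp (1 / 2) / sqrt (2 * PI).

Lemma phi_exp_const_pos : 0 < phi_exp_const.
Proof.
  unfold phi_exp_const. pose proof sqrt_2PI_ge2.
  apply Rdiv_lt_0_compat; [apply exp_pos | lra].
Qed.

Lemma phi_le_exp_abs t : phi t <= phi_exp_const * exp (- Rabs t).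
Proof.
  unfold std_normal_pdf, phi_exp_const. pose proof sqrt_2PI_ge2.
  assert (exp (- (t ^ 2) / 2) <= exp (1 / 2) * exp (- Rabs t)).
  { rewrite <- exp_plus. apply exp_le.
    assert (t ^ 2 = Rabs t * Rabs t) by (rewrite <- Rabs_mult, Rabs_right by nra; ring).
    pose proof (pow2_ge_0 (Rabs t - 1)). nra. }
  replace (exp (1 / 2) / sqrt (2 * PI) * exp (- Rabs t))
    with (exp (1 / 2) * exp (- Rabs t) * / sqrt (2 * PI)) by (field; lra).
  apply Rmult_le_compat_r; [left; apply Rinv_0_lt_compat |]; lra.
Qed.

Lemma phi_exp_const_sq : 4 * phi_exp_const ^ 2 <= 2.
Proof.
  unfold phi_exp_const. pose proof sqrt_2PI_ge2. pose proof exp_le_3. pose proof PI2_3_2.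
  assert (Hs : sqrt (2 * PI) * sqrt (2 * PI) = 2 * PI) by (apply sqrt_sqrt; lra).
  assert (He : exp (1 / 2) * exp (1 / 2) = exp 1) by (rewrite <- exp_plus; f_equal; lra).
  replace (4 * (exp (1 / 2) / sqrt (2 * PI)) ^ 2)
    with (4 * (exp (1 / 2) * exp (1 / 2)) / (sqrt (2 * PI) * sqrt (2 * PI))) by (field; lra).
  rewrite He, Hs. apply Rmult_le_reg_r with (2 * PI); [lra |].
  unfold Rdiv. rewrite Rmult_assoc, Rinv_l by lra. lra.
Qed.

Lemma Phi_left y : is_RInt_gen phi minus_infty (at_point y) (Phi y) /\
  0 <= Phi y <= phi_exp_const * exp y.
Proof.
  pose proof phi_exp_const_pos.
  destruct (monotone_integral_left phi y (phi_exp_const * exp y)) as [l [Hl Hb]].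
  - apply phi_continuous.
  - intros x _. left; apply phi_pos.
  - intros a Ha. apply Rle_trans with (RInt (fun t => phi_exp_const * exp t) a y).
    + apply RInt_le; auto; try apply ex_RInt_continuous_on_R; try apply phi_continuous.
      * apply (continuous_on_R_of_derive _ (fun t => phi_exp_const * exp t)).
        intros x. auto_derive; auto; ring.
      * intros t _. eapply Rle_trans; [apply phi_le_exp_abs |].
        apply Rmult_le_compat_l; [lra | apply exp_le].
        pose proof (Rle_abs (- t)). rewrite Rabs_Ropp in H0. lra.
    + rewrite (RInt_antiderivative _ (fun t => phi_exp_const * exp t)).
      * pose proof (exp_pos a). nra.
      * apply (continuous_on_R_of_derive _ (fun t => phi_exp_const * exp t)).
        intros x. auto_derive; auto; ring.
      * intros x. auto_derive; auto; ring.
  - unfold Phi. rewrite (RInt_gen_of_is phi l Hl). auto.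
Qed.

(* The total mass of φ (equal to 1, which we never need). *)
Definition phi_mass : R := RInt_gen phi minus_infty plus_infty.

Lemma Phi_tail y : is_RInt_gen phi (at_point y) plus_infty (phi_mass - Phi y) /\
  0 <= phi_mass - Phi y <= phi_exp_const * exp (- y).
Proof.
  pose proof phi_exp_const_pos.
  destruct (monotone_integral_right phi y (phi_exp_const * exp (- y))) as [r [Hr Hb]].
  - apply phi_continuous.
  - intros x _. left; apply phi_pos.
  - intros a Ha. apply Rle_trans with (RInt (fun t => phi_exp_const * exp (- t)) y a).
    + apply RInt_le; auto; try apply ex_RInt_continuous_on_R; try apply phi_continuous.
      * apply (continuous_on_R_of_derive _ (fun t => - phi_exp_const * exp (- t))).
        intros x. auto_derive; auto; ring.
      * intros t _. eapply Rle_trans; [apply phi_le_exp_abs |].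
        apply Rmult_le_compat_l; [lra | apply exp_le].
        pose proof (Rle_abs t). lra.
    + rewrite (RInt_antiderivative _ (fun t => - phi_exp_const * exp (- t))).
      * pose proof (exp_pos (- a)). nra.
      * apply (continuous_on_R_of_derive _ (fun t => - phi_exp_const * exp (- t))).
        intros x. auto_derive; auto; ring.
      * intros x. auto_derive; auto; ring.
  - assert (Hmass : phi_mass = Phi y + r).
    { unfold phi_mass. apply RInt_gen_of_is.
      exact (is_RInt_gen_Chasles (V := R_NormedModule) phi y _ _ (proj1 (Phi_left y)) Hr). }
    replace (phi_mass - Phi y) with r by lra. auto.
Qed.

(* φ_mass <= Φ 0 + (φ_mass - Φ 0) <= 2c, hence φ_mass² <= 2. *)
Lemma phi_mass_bounds : 0 <= phi_mass /\ phi_mass ^ 2 <= 2 /\ phi_mass <= 2.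
Proof.
  destruct (Phi_left 0) as [_ H1]. destruct (Phi_tail 0) as [_ H2].
  rewrite exp_0 in H1. rewrite Ropp_0, exp_0 in H2.
  pose proof phi_exp_const_sq. pose proof phi_exp_const_pos.
  assert (0 <= phi_mass <= 2 * phi_exp_const) by lra. nra.
Qed.

Lemma Phi_chasles y z : Phi y + RInt phi y z = Phi z.
Proof.
  symmetry. apply RInt_gen_of_is.
  apply (is_RInt_gen_Chasles (V := R_NormedModule) phi y _ _ (proj1 (Phi_left y))).
  apply is_RInt_gen_at_point, (RInt_correct (V := R_CompleteNormedModule)).
  apply ex_RInt_continuous_on_R, phi_continuous.
Qed.

Lemma Phi_deriv y : is_derive Phi y (phi y).
Proof.
  apply is_derive_ext with (fun z => Phi 0 + RInt phi 0 z); [intros; apply Phi_chasles |].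
  replace (phi y) with (0 + phi y) by ring.
  apply (is_derive_plus (K := R_AbsRing) (V := R_NormedModule));
    [apply (is_derive_const (K := R_AbsRing) (V := R_NormedModule)) |].
  apply (is_derive_RInt (V := R_NormedModule) phi _ 0 y).
  - apply filter_forall. intros z. apply (RInt_correct (V := R_CompleteNormedModule)).
    apply ex_RInt_continuous_on_R, phi_continuous.
  - apply phi_continuous.
Qed.

Lemma Phi_continuous : continuous_on_R Phi.
Proof. apply (continuous_on_R_of_derive _ _ Phi_deriv). Qed.

Lemma laplace_affine m s x : 0 < s -> exp (- Rabs ((x - m) / s)) = laplace m s x.
Proof.
  intros Hs. unfold laplace. do 2 f_equal. unfold Rdiv.
  rewrite Rabs_mult, (Rabs_right (/ s)) by (left; apply Rinv_0_lt_compat; lra). reflexivity.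
Qed.

Lemma Phi_affine_deriv m s x : 0 < s ->
  is_derive (fun y => Phi ((y - m) / s)) x (phi ((x - m) / s) / s).
Proof.
  intros Hs. replace (phi ((x - m) / s) / s) with (/ s * phi ((x - m) / s)) by (field; lra).
  apply (is_derive_comp Phi (fun y => (y - m) / s) x); [apply Phi_deriv |].
  auto_derive; auto. field. lra.
Qed.

Lemma phi_affine_deriv m s x : 0 < s -> is_derive (fun y => phi ((y - m) / s)) x
  (- ((x - m) / s) * phi ((x - m) / s) / s).
Proof.
  intros Hs.
  replace (- ((x - m) / s) * phi ((x - m) / s) / s)
    with (/ s * (- ((x - m) / s) * phi ((x - m) / s)))
    by (field; lra).
  apply (is_derive_comp phi (fun y => (y - m) / s) x); [apply phi_deriv |].
  auto_derive; auto. field. lra.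
Qed.

Lemma phi_affine_continuous m s : continuous_on_R (fun x => phi ((x - m) / s)).
Proof. apply continuous_on_R_comp; [apply continuous_on_R_affine | apply phi_continuous]. Qed.

Lemma Phi_affine_continuous m s : continuous_on_R (fun x => Phi ((x - m) / s)).
Proof. apply continuous_on_R_comp; [apply continuous_on_R_affine | apply Phi_continuous]. Qed.

(* ∫ φ(w)/s dx = φ_mass: the weight of the mean derivative. *)
Lemma phi_affine_integral m s : 0 < s ->
  is_RInt_gen (fun x => phi ((x - m) / s) / s) minus_infty plus_infty phi_mass.
Proof.
  intros Hs. replace phi_mass with (phi_mass - 0) by ring.
  apply (is_RInt_gen_antiderivative _ (fun x => Phi ((x - m) / s))).
  - apply (continuous_on_R_ext (fun x => phi ((x - m) / s) * / s)); [reflexivity |].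
    apply continuous_on_R_mult; [apply phi_affine_continuous | apply continuous_on_R_const].
  - intros x. apply Phi_affine_deriv, Hs.
  - apply (filterlim_m_infty_of_laplace _ _ phi_exp_const m s Hs). intros x Hx.
    destruct (Phi_left ((x - m) / s)) as [_ HPhi].
    assert (Hw : (x - m) / s <= 0)
      by (unfold Rdiv; apply Rmult_le_0_r; [lra | left; apply Rinv_0_lt_compat; lra]).
    rewrite Rminus_0_r, Rabs_right by lra.
    rewrite <- laplace_affine, Rabs_left1, Ropp_involutive by auto. lra.
  - apply (filterlim_p_infty_of_laplace _ _ phi_exp_const m s Hs). intros x Hx.
    destruct (Phi_tail ((x - m) / s)) as [_ HPhi].
    assert (Hw : 0 <= (x - m) / s) by (apply Rdiv_le_0_compat; lra).
    rewrite Rabs_minus_sym, Rabs_right by lra.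
    rewrite <- laplace_affine, Rabs_right by (auto || lra). lra.
Qed.

(* ∫ |w| φ(w)/s dx = 2 φ(0): the weight of the scale derivative. *)
Lemma abs_moment_integral m s : 0 < s ->
  is_RInt_gen (fun x => Rabs ((x - m) / s) * phi ((x - m) / s) / s) minus_infty plus_infty
    (2 * phi 0).
Proof.
  intros Hs.
  assert (Hcont : continuous_on_R (fun x => - ((x - m) / s) * phi ((x - m) / s) / s)).
  { apply (continuous_on_R_ext (fun x => (x - m) / s * phi ((x - m) / s) * (- / s)));
      [intros; field; lra |].
    apply continuous_on_R_mult; [| apply continuous_on_R_const].
    apply continuous_on_R_mult; [apply continuous_on_R_affine | apply phi_affine_continuous]. }
  assert (Hdecay : forall x, Rabs (phi ((x - m) / s) - 0) <= phi_exp_const * laplace m s x).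
  { intros x. rewrite Rminus_0_r, Rabs_right by (left; apply phi_pos).
    rewrite <- laplace_affine by auto. apply phi_le_exp_abs. }
  assert (Hw0 : (m - m) / s = 0) by (field; lra).
  assert (HL : is_RInt_gen (fun x => Rabs ((x - m) / s) * phi ((x - m) / s) / s)
                 minus_infty (at_point m) (phi ((m - m) / s) - 0)).
  { apply (is_RInt_gen_ext_left (fun x => - ((x - m) / s) * phi ((x - m) / s) / s)).
    { intros x Hx. rewrite Rabs_left1; [reflexivity |].
      unfold Rdiv. apply Rmult_le_0_r; [lra | left; apply Rinv_0_lt_compat; lra]. }
    apply (is_RInt_gen_antiderivative _ (fun x => phi ((x - m) / s))); auto.
    - intros x. apply phi_affine_deriv, Hs.
    - apply (filterlim_m_infty_of_laplace _ _ phi_exp_const m s Hs). intros; apply Hdecay.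
    - exact (filterlim_at_point (fun x => phi ((x - m) / s)) m). }
  assert (HR : is_RInt_gen (fun x => Rabs ((x - m) / s) * phi ((x - m) / s) / s)
                 (at_point m) plus_infty (0 - - phi ((m - m) / s))).
  { apply (is_RInt_gen_ext_right (fun x => - (- ((x - m) / s) * phi ((x - m) / s) / s))).
    { intros x Hx. rewrite Rabs_right; [field; lra |].
      apply Rle_ge, Rdiv_le_0_compat; lra. }
    apply (is_RInt_gen_antiderivative _ (fun x => - phi ((x - m) / s))).
    - apply (continuous_on_R_ext (fun x => -1 * (- ((x - m) / s) * phi ((x - m) / s) / s)));
        [intros; ring |].
      apply continuous_on_R_mult; [apply continuous_on_R_const | auto].
    - intros x. apply (is_derive_opp (K := R_AbsRing) (V := R_NormedModule)), phi_affine_deriv, Hs.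
    - exact (filterlim_at_point (fun x => - phi ((x - m) / s)) m).
    - apply (filterlim_p_infty_of_laplace _ _ phi_exp_const m s Hs). intros x _.
      rewrite Rminus_0_r, Rabs_Ropp, <- (Rminus_0_r (phi _)). apply Hdecay. }
  replace (2 * phi 0) with (plus (phi ((m - m) / s) - 0) (0 - - phi ((m - m) / s)))
    by (rewrite Hw0; unfold plus; simpl; ring).
  exact (is_RInt_gen_Chasles (V := R_NormedModule) _ m _ _ HL HR).
Qed.

Lemma sumR_ext n f g : (forall i, (i < n)%nat -> f i = g i) -> sumR n f = sumR n g.
Proof.
  induction n as [| n IH]; simpl; intros H; auto.
  rewrite IH by (intros; apply H; lia). rewrite (H n) by lia. reflexivity.
Qed.

Lemma sumR_le n f g : (forall i, (i < n)%nat -> f i <= g i) -> sumR n f <= sumR n g.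
Proof.
  induction n as [| n IH]; simpl; intros H; [lra |].
  pose proof (IH (fun i Hi => H i ltac:(lia))). pose proof (H n ltac:(lia)). lra.
Qed.

Lemma sumR_scal n c f : sumR n (fun i => c * f i) = c * sumR n f.
Proof. induction n as [| n IH]; simpl; [ring | rewrite IH; ring]. Qed.

Lemma sumR_minus n f g : sumR n (fun i => f i - g i) = sumR n f - sumR n g.
Proof. induction n as [| n IH]; simpl; [ring | rewrite IH; ring]. Qed.

Lemma sumR_nonneg n f : (forall i, (i < n)%nat -> 0 <= f i) -> 0 <= sumR n f.
Proof.
  induction n as [| n IH]; simpl; intros H; [lra |].
  pose proof (IH (fun i Hi => H i ltac:(lia))). pose proof (H n ltac:(lia)). lra.
Qed.

Lemma sumR_term n f j : (j < n)%nat -> (forall i, (i < n)%nat -> 0 <= f i) -> f j <= sumR n f.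
Proof.
  induction n as [| n IH]; intros Hj H; [lia |]. simpl.
  pose proof (sumR_nonneg n f (fun i Hi => H i ltac:(lia))). pose proof (H n ltac:(lia)).
  destruct (Nat.eq_dec j n) as [-> | Hne]; [lra |].
  pose proof (IH ltac:(lia) (fun i Hi => H i ltac:(lia))). lra.
Qed.

Lemma sumR_upd n (h : nat -> R -> R) g j v : (j < n)%nat ->
  sumR n (fun i => h i (upd g j v i)) = sumR n (fun i => h i (g i)) - h j (g j) + h j v.
Proof.
  induction n as [| n IH]; intros Hj; [lia |]. simpl. unfold upd at 2.
  destruct (Nat.eq_dec n j) as [-> | Hne].
  - rewrite (sumR_ext j (fun i => h i (upd g j v i)) (fun i => h i (g i))); [ring |].
    intros i Hi. unfold upd. destruct (Nat.eq_dec i j); [lia | auto].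
  - rewrite IH by lia. ring.
Qed.

Lemma upd_upd (f : nat -> R) j t v : upd (upd f j t) j v = upd f j v.
Proof.
  apply functional_extensionality. intros i. unfold upd. destruct Nat.eq_dec; auto.
Qed.

Lemma upd_same (f : nat -> R) j t : upd f j t j = t.
Proof. unfold upd. destruct Nat.eq_dec; [auto | lia]. Qed.

Lemma weight_bounds n p mu sigma j : is_gmixture n p mu sigma -> (j < n)%nat -> 0 <= p j <= 1.
Proof. intros [Hp [Hs _]] Hj. split; auto. rewrite <- Hs. apply sumR_term; auto. Qed.

Lemma mixture_cdf_continuous n p mu sigma : continuous_on_R (mixture_cdf n p mu sigma).
Proof.
  unfold mixture_cdf. induction n as [| n IH]; simpl; [apply continuous_on_R_const |].
  apply continuous_on_R_plus; auto.
  apply continuous_on_R_mult; [apply continuous_on_R_const | apply Phi_affine_continuous].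
Qed.

Lemma mixture_cdf_bounds n p mu sigma x : is_gmixture n p mu sigma ->
  0 <= mixture_cdf n p mu sigma x <= phi_mass.
Proof.
  intros [Hp [Hs _]]. unfold mixture_cdf. split.
  - apply sumR_nonneg. intros i Hi. apply Rmult_le_pos; auto. apply Phi_left.
  - replace phi_mass with (sumR n (fun i => phi_mass * p i)) by (rewrite sumR_scal, Hs; ring).
    apply sumR_le. intros i Hi. rewrite Rmult_comm. apply Rmult_le_compat_r; auto.
    destruct (Phi_tail ((x - mu i) / sigma i)); lra.
Qed.

Lemma scales_bounded n (sigma : nat -> R) :
  exists S, 0 < S /\ forall j, (j < n)%nat -> sigma j <= S.
Proof.
  exists (1 + sumR n (fun i => Rabs (sigma i))). split.
  - pose proof (sumR_nonneg n (fun i => Rabs (sigma i)) (fun i _ => Rabs_pos _)). lra.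
  - intros j Hj. pose proof (sumR_term n (fun i => Rabs (sigma i)) j Hj (fun i _ => Rabs_pos _)).
    pose proof (Rle_abs (sigma j)). simpl in *. lra.
Qed.

Lemma affine_exponent_bounds x m s S : 0 < s <= S ->
  (x <= 0 -> (x - m) / s <= - (Rabs x / S) + Rabs m / s) /\
  (0 <= x -> - ((x - m) / s) <= - (Rabs x / S) + Rabs m / s).
Proof.
  intros Hs. assert (HsS : / S <= / s) by (apply Rinv_le_contravar; lra).
  pose proof (Rle_abs m). pose proof (Rle_abs (- m)). rewrite Rabs_Ropp in *.
  assert (0 < / s) by (apply Rinv_0_lt_compat; lra).
  unfold Rdiv. split; intros Hx.
  - rewrite Rabs_left1 by lra. nra.
  - rewrite Rabs_right by lra. nra.
Qed.

Lemma mixture_tails n p mu sigma S : is_gmixture n p mu sigma -> 0 < S ->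
  (forall j, (j < n)%nat -> sigma j <= S) ->
  exists K, 0 <= K /\ forall x,
    (x <= 0 -> mixture_cdf n p mu sigma x <= K * laplace 0 S x) /\
    (0 <= x -> phi_mass - mixture_cdf n p mu sigma x <= K * laplace 0 S x).
Proof.
  intros [Hp [Hs Hsg]] HS HsS. pose proof phi_exp_const_pos.
  set (c := fun i => phi_exp_const * exp (Rabs (mu i) / sigma i)).
  assert (Hc : forall i, 0 <= c i)
    by (intros i; unfold c; pose proof (exp_pos (Rabs (mu i) / sigma i)); nra).
  assert (Hcomp : forall i x, (i < n)%nat ->
    phi_exp_const * exp (- (Rabs x / S) + Rabs (mu i) / sigma i) = c i * laplace 0 S x).
  { intros i x _. unfold c, laplace. rewrite Rminus_0_r, exp_plus. ring. }
  exists (sumR n (fun i => p i * c i)). split.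
  { apply sumR_nonneg. intros i Hi. apply Rmult_le_pos; auto. }
  intros x. unfold mixture_cdf.
  rewrite Rmult_comm, <- sumR_scal.
  split; intros Hx.
  - apply sumR_le. intros i Hi. rewrite (Rmult_comm (laplace 0 S x)), Rmult_assoc, <- Hcomp by auto.
    apply Rmult_le_compat_l; auto.
    destruct (Phi_left ((x - mu i) / sigma i)) as [_ [_ HPhi]]. eapply Rle_trans; [exact HPhi |].
    apply Rmult_le_compat_l; [lra | apply exp_le].
    apply (proj1 (affine_exponent_bounds x (mu i) (sigma i) S (conj (Hsg i Hi) (HsS i Hi)))), Hx.
  - replace phi_mass with (sumR n (fun i => p i * phi_mass)) at 1
      by (rewrite (sumR_ext n _ (fun i => phi_mass * p i)) by (intros; ring);
          rewrite sumR_scal, Hs; ring).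
    rewrite <- sumR_minus. apply sumR_le. intros i Hi.
    rewrite (Rmult_comm (laplace 0 S x)), Rmult_assoc, <- Hcomp, <- Rmult_minus_distr_l by auto.
    apply Rmult_le_compat_l; auto.
    destruct (Phi_tail ((x - mu i) / sigma i)) as [_ [_ HPhi]]. eapply Rle_trans; [exact HPhi |].
    apply Rmult_le_compat_l; [lra | apply exp_le].
    apply (proj2 (affine_exponent_bounds x (mu i) (sigma i) S (conj (Hsg i Hi) (HsS i Hi)))), Hx.
Qed.

Lemma mixture_difference_bound n p mu sigma n' p' mu' sigma' :
  is_gmixture n p mu sigma -> is_gmixture n' p' mu' sigma' ->
  exists K S, 0 < S /\ forall x,
    Rabs (mixture_cdf n p mu sigma x - mixture_cdf n' p' mu' sigma' x) <= K * laplace 0 S x.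
Proof.
  intros H1 H2.
  destruct (scales_bounded n sigma) as [S1 [HS1 HB1]].
  destruct (scales_bounded n' sigma') as [S2 [HS2 HB2]].
  destruct (mixture_tails n p mu sigma (S1 + S2)) as [K1 [HK1 T1]];
    [auto | lra | intros j Hj; specialize (HB1 j Hj); lra |].
  destruct (mixture_tails n' p' mu' sigma' (S1 + S2)) as [K2 [HK2 T2]];
    [auto | lra | intros j Hj; specialize (HB2 j Hj); lra |].
  exists (K1 + K2), (S1 + S2). split; [lra |]. intros x.
  pose proof (mixture_cdf_bounds n p mu sigma x H1).
  pose proof (mixture_cdf_bounds n' p' mu' sigma' x H2).
  pose proof (laplace_bounds 0 (S1 + S2) x ltac:(lra)).
  destruct (T1 x) as [L1 R1]. destruct (T2 x) as [L2 R2].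
  apply Rabs_le. destruct (Rle_lt_dec x 0) as [Hx | Hx].
  - specialize (L1 Hx). specialize (L2 Hx). nra.
  - specialize (R1 ltac:(lra)). specialize (R2 ltac:(lra)). nra.
Qed.

Lemma cramer_integrable n p mu sigma n' p' mu' sigma' :
  is_gmixture n p mu sigma -> is_gmixture n' p' mu' sigma' ->
  is_RInt_gen (fun x => (mixture_cdf n p mu sigma x - mixture_cdf n' p' mu' sigma' x) ^ 2)
    minus_infty plus_infty (cramer2_sq n p mu sigma n' p' mu' sigma').
Proof.
  intros H1 H2.
  destruct (mixture_difference_bound _ _ _ _ _ _ _ _ H1 H2) as [K [S [HS HD]]].
  set (D := fun x => mixture_cdf n p mu sigma x - mixture_cdf n' p' mu' sigma' x).
  assert (HD0 : forall x, Rabs (D x) <= phi_mass).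
  { intros x. pose proof (mixture_cdf_bounds n p mu sigma x H1).
    pose proof (mixture_cdf_bounds n' p' mu' sigma' x H2). apply Rabs_le. unfold D. lra. }
  destruct (dominated_integrable (fun x => D x ^ 2) (fun x => phi_mass * K * laplace 0 S x)
              (scal (phi_mass * K) (2 * S))) as [l [Hl _]].
  - apply (continuous_on_R_ext (fun x => D x * D x)); [intros; ring |].
    apply continuous_on_R_mult; apply continuous_on_R_minus; apply mixture_cdf_continuous.
  - apply continuous_on_R_mult; [apply continuous_on_R_const | apply laplace_continuous].
  - intros x. rewrite <- RPow_abs. pose proof (Rabs_pos (D x)). specialize (HD0 x).
    specialize (HD x). fold D in HD. simpl. rewrite Rmult_1_r, Rmult_assoc.
    apply Rmult_le_compat; auto.
  - apply (is_RInt_gen_scal (V := R_NormedModule)), laplace_integral, HS.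
  - unfold D in Hl. unfold cramer2_sq. rewrite (RInt_gen_of_is _ l Hl). exact Hl.
Qed.

Lemma mixture_cdf_upd_mean n p mu sigma j a x : (j < n)%nat ->
  mixture_cdf n p (upd mu j a) sigma x =
  mixture_cdf n p mu sigma x + p j * (Phi ((x - a) / sigma j) - Phi ((x - mu j) / sigma j)).
Proof.
  intros Hj. unfold mixture_cdf.
  rewrite (sumR_upd n (fun i y => p i * Phi ((x - y) / sigma i)) mu j a Hj). ring.
Qed.

Lemma mixture_cdf_upd_scale n p mu sigma j s x : (j < n)%nat ->
  mixture_cdf n p mu (upd sigma j s) x =
  mixture_cdf n p mu sigma x + p j * (Phi ((x - mu j) / s) - Phi ((x - mu j) / sigma j)).
Proof.
  intros Hj. unfold mixture_cdf.
  rewrite (sumR_upd n (fun i y => p i * Phi ((x - mu i) / y)) sigma j s Hj). ring.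
Qed.

Lemma is_gmixture_upd_mean n p mu sigma j a :
  is_gmixture n p mu sigma -> is_gmixture n p (upd mu j a) sigma.
Proof. auto. Qed.

Lemma is_gmixture_upd_scale n p mu sigma j s :
  is_gmixture n p mu sigma -> 0 < s -> is_gmixture n p mu (upd sigma j s).
Proof.
  intros [Hp [Hs Hsg]] Hpos. repeat split; auto.
  intros i Hi. unfold upd. destruct Nat.eq_dec; auto.
Qed.

Lemma cramer_perturbation_integral n p mu sigma n' p' mu' sigma' (F : R -> R) (u : R -> R) q :
  is_gmixture n p mu sigma -> is_gmixture n' p' mu' sigma' ->
  (forall x, mixture_cdf n p mu sigma x = F x + q * u x) ->
  is_RInt_gen (fun x => ((F x - mixture_cdf n' p' mu' sigma' x) + q * u x) ^ 2)
    minus_infty plus_infty (cramer2_sq n p mu sigma n' p' mu' sigma').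
Proof.
  intros H1 H2 HF.
  apply (is_RInt_gen_ext
           (fun x => (mixture_cdf n p mu sigma x - mixture_cdf n' p' mu' sigma' x) ^ 2)).
  - apply filter_forall. intros _ x _. rewrite (HF x). apply (f_equal (fun t : R => t ^ 2)). ring.
  - apply cramer_integrable; auto.
Qed.

(* Near w (within (1 + |w|)/3) the density and its
   derivative are bounded by gauss_weight w, which decays like exp(-|w|/3)
   even after multiplication by w²; this controls first- and second-order
   increments of Φ by an integrable envelope. *)

Definition gauss_envelope (w : R) : R := 1000 * exp (- (Rabs w / 3)).

(* Two terms of the exponential series, squared: exp s >= (1 + s/2)². *)
Lemma exp_ge_quadratic s : 0 <= s -> 1 + s + s * s / 4 <= exp s.
Proof.
  intros Hs.
  replace (exp s) with (exp (s / 2) * exp (s / 2)) by (rewrite <- exp_plus; f_equal; field).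
  assert (H : 1 + s / 2 <= exp (s / 2)).
  { destruct (Req_dec s 0) as [-> | Hne].
    - replace (0 / 2) with 0 by field. rewrite exp_0. lra.
    - left. apply exp_ineq1. lra. }
  nra.
Qed.

(* For |w| > 2 and t within (1 + |w|)/3 of w we have |t| >= |w|/2, so the
   Gaussian factor exp(-t²/2) beats the polynomial (1 + w²)(1 + |t|). *)
Lemma phi_local_bound_large w t : 2 < Rabs w -> Rabs (t - w) <= (1 + Rabs w) / 3 ->
  (1 + w ^ 2) * (1 + Rabs t) * phi t <= gauss_envelope w.
Proof.
  intros Hw Htw. unfold gauss_envelope.
  set (a := Rabs w) in *. set (q := Rabs t).
  assert (Hw2 : w ^ 2 = a * a) by (unfold a; rewrite <- Rabs_mult, Rabs_right by nra; ring).
  assert (Ht2 : t ^ 2 = q * q) by (unfold q; rewrite <- Rabs_mult, Rabs_right by nra; ring).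
  pose proof (Rabs_triang_inv t w). pose proof (Rabs_triang_inv w t).
  rewrite Rabs_minus_sym in H0. fold a q in H, H0.
  assert (Hq : a / 2 <= q <= (4 * a + 1) / 3) by lra.
  set (ee := exp (a * a / 16)). set (em := exp (- (a / 3))).
  assert (Hem : 0 < em) by apply exp_pos. assert (Hee0 : 0 < ee) by apply exp_pos.
  assert (Hee : 1 + a * a / 16 + a * a / 16 * (a * a / 16) / 4 <= ee)
    by (apply exp_ge_quadratic; nra).
  assert (Hhalf : exp (1 / 2) <= 2).
  { pose proof exp_le_3. pose proof (exp_pos (1 / 2)).
    assert (exp (1 / 2) * exp (1 / 2) = exp 1) by (rewrite <- exp_plus; f_equal; field). nra. }
  assert (Hgauss : exp (- (t ^ 2) / 2) <= em * (exp (1 / 2) * / ee)).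
  { unfold em, ee. rewrite <- exp_Ropp, <- !exp_plus. apply exp_le. rewrite Ht2.
    assert (a * a / 4 <= q * q) by nra. pose proof (pow2_ge_0 (a / 4 - 2 / 3)). nra. }
  assert (Hphi : phi t <= em * (2 * / ee)).
  { eapply Rle_trans; [apply phi_le_gauss | eapply Rle_trans; [exact Hgauss |]].
    apply Rmult_le_compat_l; [lra |].
    apply Rmult_le_compat_r; [left; apply Rinv_0_lt_compat; lra | lra]. }
  assert (Hpoly : 2 * (1 + a * a) * (1 + q) <= 1000 * ee).
  { assert (2 * (1 + a * a) * (1 + q) <= 2 * (1 + a * a) * ((4 + 4 * a) / 3))
      by (apply Rmult_le_compat_l; nra).
    pose proof (pow2_ge_0 (a * a - 10 * a)). pose proof (pow2_ge_0 (a - 1)). nra. }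
  rewrite Hw2. pose proof (phi_pos t).
  apply Rle_trans with ((1 + a * a) * (1 + q) * (em * (2 * / ee)));
    [apply Rmult_le_compat_l; nra |].
  replace ((1 + a * a) * (1 + q) * (em * (2 * / ee))) with (em * (2 * (1 + a * a) * (1 + q) * / ee))
    by ring.
  rewrite Rmult_comm. apply Rmult_le_compat_r; [lra |].
  apply Rmult_le_reg_r with ee; [lra |]. rewrite Rmult_assoc, Rinv_l by lra. lra.
Qed.

Lemma phi_local_bound w t : Rabs (t - w) <= (1 + Rabs w) / 3 ->
  (1 + w ^ 2) * (1 + Rabs t) * phi t <= gauss_envelope w.
Proof.
  intros Htw. destruct (Rlt_le_dec 2 (Rabs w)) as [Hw | Hw]; [apply phi_local_bound_large; auto |].
  unfold gauss_envelope. pose proof (phi_pos t). pose proof (phi_le_half t).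
  assert (Hw2 : w ^ 2 <= 4).
  { replace (w ^ 2) with (Rabs w * Rabs w) by (rewrite <- Rabs_mult, Rabs_right by nra; ring).
    pose proof (Rabs_pos w). nra. }
  assert (Ht : Rabs t <= 3) by (pose proof (Rabs_triang_inv t w); lra).
  assert (Hexp : / 3 <= exp (- (Rabs w / 3))).
  { apply Rle_trans with (exp (- (1))); [| apply exp_le; lra].
    rewrite exp_Ropp. apply Rinv_le_contravar; [apply exp_pos | apply exp_le_3]. }
  assert (0 <= 1 + w ^ 2) by nra. assert (0 <= 1 + Rabs t) by (pose proof (Rabs_pos t); lra).
  assert ((1 + w ^ 2) * (1 + Rabs t) <= 20) by nra. nra.
Qed.

Definition gauss_weight (w : R) : R := gauss_envelope w / (1 + w ^ 2).

Lemma gauss_weight_pos w : 0 < gauss_weight w.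
Proof.
  unfold gauss_weight, gauss_envelope. pose proof (exp_pos (- (Rabs w / 3))).
  pose proof (pow2_ge_0 w). apply Rdiv_lt_0_compat; lra.
Qed.

Lemma gauss_weight_moments w :
  gauss_weight w <= gauss_envelope w /\ Rabs w * gauss_weight w <= gauss_envelope w /\
  w ^ 2 * gauss_weight w <= gauss_envelope w.
Proof.
  unfold gauss_weight. pose proof (pow2_ge_0 w).
  assert (He : 0 < gauss_envelope w)
    by (unfold gauss_envelope; pose proof (exp_pos (- (Rabs w / 3))); lra).
  assert (Hw : Rabs w <= 1 + w ^ 2).
  { replace (w ^ 2) with (Rabs w * Rabs w) by (rewrite <- Rabs_mult, Rabs_right by nra; ring).
    pose proof (pow2_ge_0 (Rabs w - 1)). nra. }
  pose proof (Rabs_pos w).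
  assert (Hk : forall c, 0 <= c <= 1 + w ^ 2 ->
                c * (gauss_envelope w / (1 + w ^ 2)) <= gauss_envelope w).
  { intros c Hc. apply Rmult_le_reg_r with (1 + w ^ 2); [lra |].
    replace (c * (gauss_envelope w / (1 + w ^ 2)) * (1 + w ^ 2)) with (c * gauss_envelope w)
      by (field; lra). nra. }
  split; [| split]; [rewrite <- (Rmult_1_l (_ / _)) |..]; apply Hk; lra.
Qed.

Lemma phi_first_moment_bound w : Rabs w * phi w <= gauss_envelope w.
Proof.
  eapply Rle_trans; [| apply (phi_local_bound w w); rewrite Rminus_diag, Rabs_R0;
                       pose proof (Rabs_pos w); lra].
  apply Rmult_le_compat_r; [left; apply phi_pos |].
  pose proof (pow2_ge_0 w). pose proof (Rabs_pos w).
  assert (0 <= w ^ 2 * Rabs w) by nra. nra.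
Qed.

Lemma phi_weight_bounds w t : Rabs (t - w) <= (1 + Rabs w) / 3 ->
  Rabs (phi t) <= gauss_weight w /\ Rabs (- t * phi t) <= gauss_weight w.
Proof.
  intros Htw. pose proof (phi_local_bound w t Htw). pose proof (phi_pos t).
  pose proof (pow2_ge_0 w). pose proof (Rabs_pos t).
  assert (Hk : (1 + Rabs t) * phi t <= gauss_weight w).
  { unfold gauss_weight. apply Rmult_le_reg_l with (1 + w ^ 2); [lra |].
    replace ((1 + w ^ 2) * (gauss_envelope w / (1 + w ^ 2))) with (gauss_envelope w)
      by (field; lra).
    rewrite <- Rmult_assoc. auto. }
  rewrite Rabs_mult, Rabs_Ropp, !(Rabs_right (phi t)) by lra. split; nra.
Qed.

Lemma Phi_increment_bound v w : Rabs (v - w) <= (1 + Rabs w) / 3 ->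
  Rabs (Phi v - Phi w) <= gauss_weight w * Rabs (v - w).
Proof.
  intros H. apply (bounded_variation Phi phi (gauss_weight w) w v). intros t Ht. split.
  - apply Phi_deriv.
  - apply (phi_weight_bounds w t). lra.
Qed.

Lemma Phi_taylor_bound v w : Rabs (v - w) <= (1 + Rabs w) / 3 ->
  Rabs (Phi v - Phi w - (v - w) * phi w) <= gauss_weight w * (v - w) ^ 2.
Proof.
  intros H.
  assert (Hphi : forall t, Rabs (t - w) <= Rabs (v - w) ->
            Rabs (phi t - phi w) <= gauss_weight w * Rabs (v - w)).
  { intros t Ht. eapply Rle_trans.
    - apply (bounded_variation phi (fun s => - s * phi s) (gauss_weight w) w t). intros s Hs.
      split; [apply phi_deriv | apply (phi_weight_bounds w s); lra].
    - apply Rmult_le_compat_l; [left; apply gauss_weight_pos | auto]. }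
  replace (Phi v - Phi w - (v - w) * phi w)
    with ((Phi v - v * phi w) - (Phi w - w * phi w)) by ring.
  replace (gauss_weight w * (v - w) ^ 2) with (gauss_weight w * Rabs (v - w) * Rabs (v - w))
    by (rewrite Rmult_assoc, <- Rabs_mult, Rabs_right by (apply Rle_ge, Rle_0_sqr); ring).
  apply (bounded_variation (fun t => Phi t - t * phi w) (fun t => phi t - phi w)). intros t Ht.
  split; auto.
  apply (is_derive_minus (K := R_AbsRing) (V := R_NormedModule)); [apply Phi_deriv |].
  auto_derive; auto; ring.
Qed.

Lemma gauss_envelope_affine m s x : 0 < s ->
  gauss_envelope ((x - m) / s) = 1000 * laplace m (3 * s) x.
Proof.
  intros Hs. unfold gauss_envelope, laplace. do 3 f_equal.
  unfold Rdiv. rewrite Rabs_mult, (Rabs_right (/ s)) by (left; apply Rinv_0_lt_compat; lra).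
  field. lra.
Qed.

Lemma Phi_shift_bounds m s a x : 0 < s -> Rabs (a - m) < s / 3 ->
  Rabs (Phi ((x - a) / s) - Phi ((x - m) / s)) <=
    Rabs (a - m) * (1000 / s) * laplace m (3 * s) x /\
  Rabs (Phi ((x - a) / s) - Phi ((x - m) / s) - (a - m) * (- phi ((x - m) / s) / s)) <=
    (a - m) ^ 2 * (1000 / s ^ 2) * laplace m (3 * s) x.
Proof.
  intros Hs Ha.
  set (w := (x - m) / s). set (v := (x - a) / s).
  assert (Hvw : v - w = - (a - m) / s) by (unfold v, w; field; lra).
  assert (Habs : Rabs (v - w) = Rabs (a - m) / s).
  { rewrite Hvw. unfold Rdiv. rewrite Rabs_mult, Rabs_Ropp, (Rabs_right (/ s)); auto.
    left; apply Rinv_0_lt_compat; lra. }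
  assert (Hnear : Rabs (v - w) <= (1 + Rabs w) / 3).
  { rewrite Habs. pose proof (Rabs_pos w). apply Rmult_le_reg_r with s; auto. unfold Rdiv.
    rewrite Rmult_assoc, Rinv_l by lra. nra. }
  destruct (gauss_weight_moments w) as [Hweight _].
  pose proof (gauss_envelope_affine m s x Hs) as Henv. fold w in Henv. rewrite Henv in Hweight.
  pose proof (laplace_bounds m (3 * s) x ltac:(lra)).
  split.
  - eapply Rle_trans; [apply Phi_increment_bound, Hnear |]. rewrite Habs.
    apply Rle_trans with (1000 * laplace m (3 * s) x * (Rabs (a - m) / s)).
    + apply Rmult_le_compat_r; [apply Rdiv_le_0_compat; [apply Rabs_pos | lra] | auto].
    + right. field. lra.
  - replace ((a - m) * (- phi w / s)) with ((v - w) * phi w) by (rewrite Hvw; field; lra).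
    eapply Rle_trans; [apply Phi_taylor_bound, Hnear |]. rewrite Hvw.
    apply Rle_trans with (1000 * laplace m (3 * s) x * (- (a - m) / s) ^ 2).
    + apply Rmult_le_compat_r; [apply pow2_ge_0 | auto].
    + right. field. lra.
Qed.

Lemma scale_change_increment m s0 s x : 0 < s0 -> Rabs (s - s0) < s0 / 4 ->
  0 < / s <= 2 * / s0 /\
  (x - m) / s - (x - m) / s0 = - ((x - m) / s0 * (s - s0)) / s /\
  Rabs ((x - m) / s - (x - m) / s0) = Rabs ((x - m) / s0) * Rabs (s - s0) * / s /\
  Rabs ((x - m) / s - (x - m) / s0) <= (1 + Rabs ((x - m) / s0)) / 3.
Proof.
  intros Hs0 Hs. pose proof (Rabs_def2 _ _ Hs) as [Hs1 Hs2].
  assert (Hinv : 0 < / s <= 2 * / s0).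
  { split; [apply Rinv_0_lt_compat; lra |].
    apply Rmult_le_reg_r with (s * s0); [nra |].
    replace (/ s * (s * s0)) with s0 by (field; lra).
    replace (2 * / s0 * (s * s0)) with (2 * s) by (field; lra). lra. }
  assert (Hhs : Rabs (s - s0) * / s <= 1 / 3).
  { apply Rmult_le_reg_r with s; [lra |]. rewrite Rmult_assoc, Rinv_l, Rmult_1_r by lra.
    left. apply Rabs_def1; lra. }
  assert (Hvw : (x - m) / s - (x - m) / s0 = - ((x - m) / s0 * (s - s0)) / s) by (field; lra).
  assert (Habs : Rabs ((x - m) / s - (x - m) / s0) = Rabs ((x - m) / s0) * Rabs (s - s0) * / s).
  { rewrite Hvw. unfold Rdiv at 1.
    rewrite Rabs_mult, Rabs_Ropp, Rabs_mult, (Rabs_right (/ s)); lra. }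
  repeat split; try lra. rewrite Habs.
  pose proof (Rabs_pos ((x - m) / s0)). pose proof (Rabs_pos (s - s0)). nra.
Qed.

(* Moving the scale of Φ((x - m)/s) from s0 to s: the increment v - w is
   proportional to w, which is absorbed by the moments of the weight; the
   second-order term also contains the correction (v - w + w h/s0) φ(w). *)
Lemma Phi_scale_bounds m s0 s x : 0 < s0 -> Rabs (s - s0) < s0 / 4 ->
  Rabs (Phi ((x - m) / s) - Phi ((x - m) / s0)) <=
    Rabs (s - s0) * (2000 / s0) * laplace m (3 * s0) x /\
  Rabs (Phi ((x - m) / s) - Phi ((x - m) / s0)
        - (s - s0) * (- ((x - m) / s0) * phi ((x - m) / s0) / s0)) <=
    (s - s0) ^ 2 * (6000 / s0 ^ 2) * laplace m (3 * s0) x.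
Proof.
  intros Hs0 Hs.
  destruct (scale_change_increment m s0 s x Hs0 Hs) as [Hinv [Hvw [Habs Hnear]]].
  assert (Hs_pos : 0 < s) by (pose proof (Rabs_def2 _ _ Hs); lra).
  pose proof (gauss_envelope_affine m s0 x Hs0) as Henv.
  set (h := s - s0) in *. set (w := (x - m) / s0) in *. set (v := (x - m) / s) in *.
  set (lap := laplace m (3 * s0) x) in *. set (E := gauss_envelope w) in *.
  destruct (gauss_weight_moments w) as [_ [Hw1 Hw2]]. fold E in Hw1, Hw2.
  pose proof (phi_first_moment_bound w) as Hwphi. fold E in Hwphi.
  pose proof (gauss_weight_pos w). pose proof (Rabs_pos w). pose proof (Rabs_pos h).
  pose proof (phi_pos w). pose proof (pow2_ge_0 h). pose proof (Rinv_0_lt_compat s0 Hs0).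
  split.
  - eapply Rle_trans; [apply Phi_increment_bound, Hnear |]. rewrite Habs.
    apply Rle_trans with (E * (Rabs h * (2 * / s0))); [| right; rewrite Henv; field; lra].
    replace (gauss_weight w * (Rabs w * Rabs h * / s))
      with ((Rabs w * gauss_weight w) * (Rabs h * / s)) by ring.
    apply Rmult_le_compat; nra.
  - replace (Phi v - Phi w - h * (- w * phi w / s0))
      with ((Phi v - Phi w - (v - w) * phi w) + (w * h ^ 2 * / s * / s0) * phi w)
      by (rewrite Hvw; unfold h; field; lra).
    eapply Rle_trans; [apply Rabs_triang |].
    assert (Htaylor : gauss_weight w * (v - w) ^ 2 <= h ^ 2 * (4000 / s0 ^ 2) * lap).
    { rewrite Hvw.
      replace (gauss_weight w * (- (w * h) / s) ^ 2)
        with ((w ^ 2 * gauss_weight w) * (h ^ 2 * (/ s * / s))) by (field; lra).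
      apply Rle_trans with (E * (h ^ 2 * (2 * / s0 * (2 * / s0))));
        [| right; rewrite Henv; field; lra].
      apply Rmult_le_compat; [nra | apply Rmult_le_pos; nra | exact Hw2 |].
      apply Rmult_le_compat_l; [lra | apply Rmult_le_compat; lra]. }
    assert (Hcorr : Rabs (w * h ^ 2 * / s * / s0 * phi w) <= h ^ 2 * (2000 / s0 ^ 2) * lap).
    { replace (w * h ^ 2 * / s * / s0 * phi w) with ((w * phi w) * (h ^ 2 * / s * / s0)) by ring.
      rewrite Rabs_mult, (Rabs_mult w), (Rabs_right (phi w)) by lra.
      rewrite (Rabs_right (h ^ 2 * / s * / s0)) by (apply Rle_ge, Rmult_le_pos; nra).
      apply Rle_trans with (E * (h ^ 2 * (2 * / s0) * / s0)); [| right; rewrite Henv; field; lra].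
      apply Rmult_le_compat; [nra | apply Rmult_le_pos; nra | exact Hwphi |].
      apply Rmult_le_compat_r; [lra | apply Rmult_le_compat_l; lra]. }
    pose proof (Phi_taylor_bound v w Hnear).
    replace (h ^ 2 * (6000 / s0 ^ 2) * lap)
      with (h ^ 2 * (4000 / s0 ^ 2) * lap + h ^ 2 * (2000 / s0 ^ 2) * lap) by (field; lra).
    lra.
Qed.

Lemma square_expansion_bound D0 q u d h B B' e c : Rabs D0 <= c -> 0 <= q <= 1 -> 0 <= e <= 1 ->
  0 <= B -> 0 <= B' -> Rabs u <= Rabs h * B * e -> Rabs (u - h * d) <= h ^ 2 * B' * e ->
  Rabs ((D0 + q * u) ^ 2 - D0 ^ 2 - h * (2 * D0 * (q * d))) <= h ^ 2 * ((B ^ 2 + 2 * c * B') * e).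
Proof.
  intros HD Hq He HB HB' Hu Hud.
  replace ((D0 + q * u) ^ 2 - D0 ^ 2 - h * (2 * D0 * (q * d)))
    with (q * q * (u * u) + 2 * D0 * q * (u - h * d)) by ring.
  assert (Hh2 : h ^ 2 = Rabs h * Rabs h)
    by (rewrite <- Rabs_mult, Rabs_right by (apply Rle_ge, Rle_0_sqr); ring).
  pose proof (Rabs_pos u). pose proof (Rabs_pos h). pose proof (Rabs_pos D0).
  pose proof (Rabs_pos (u - h * d)).
  assert (Huu : Rabs u * Rabs u <= h ^ 2 * B ^ 2 * e).
  { assert (0 <= Rabs h * B) by nra.
    apply Rle_trans with ((Rabs h * B * e) * (Rabs h * B * e)); [apply Rmult_le_compat; auto |].
    rewrite Hh2. assert (e * e <= e) by nra.
    replace (Rabs h * B * e * (Rabs h * B * e))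
      with ((Rabs h * B) * (Rabs h * B) * (e * e)) by ring.
    replace (Rabs h * Rabs h * B ^ 2 * e) with ((Rabs h * B) * (Rabs h * B) * e) by ring.
    apply Rmult_le_compat_l; nra. }
  eapply Rle_trans; [apply Rabs_triang |]. rewrite !Rabs_mult.
  rewrite (Rabs_right q), (Rabs_right 2) by lra.
  assert (0 <= h ^ 2) by (rewrite Hh2; nra).
  assert (q * q <= 1) by nra. assert (0 <= Rabs u * Rabs u) by nra.
  assert (q * q * (Rabs u * Rabs u) <= h ^ 2 * B ^ 2 * e) by nra.
  assert (2 * Rabs D0 * q * Rabs (u - h * d) <= 2 * c * (h ^ 2 * B' * e)).
  { assert (Rabs D0 * q <= c) by nra. assert (0 <= Rabs D0 * q) by nra. nra. }
  nra.
Qed.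

Section ComponentPerturbation.

Variables (D0 d g e : R -> R) (u : R -> R -> R) (L : R -> R).
Variables (a0 delta q c B B' Ig Ie : R).

Hypothesis D0_continuous : continuous_on_R D0.
Hypothesis D0_bounded : forall x, Rabs (D0 x) <= c.
Hypothesis d_continuous : continuous_on_R d.
Hypothesis g_continuous : continuous_on_R g.
Hypothesis d_dominated : forall x, Rabs (d x) <= g x.
Hypothesis g_integral : is_RInt_gen g minus_infty plus_infty Ig.
Hypothesis q_bounds : 0 <= q <= 1.
Hypothesis e_bounds : forall x, 0 <= e x <= 1.
Hypothesis e_integral : is_RInt_gen e minus_infty plus_infty Ie.
Hypothesis delta_pos : 0 < delta.
Hypothesis B_nonneg : 0 <= B.
Hypothesis B'_nonneg : 0 <= B'.
Hypothesis L_integral : forall a, Rabs (a - a0) < delta ->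
  is_RInt_gen (fun x => (D0 x + q * u a x) ^ 2) minus_infty plus_infty (L a).
Hypothesis u_at_a0 : forall x, u a0 x = 0.
Hypothesis u_first_order : forall a x, Rabs (a - a0) < delta ->
  Rabs (u a x) <= Rabs (a - a0) * B * e x.
Hypothesis u_second_order : forall a x, Rabs (a - a0) < delta ->
  Rabs (u a x - (a - a0) * d x) <= (a - a0) ^ 2 * B' * e x.

Lemma component_perturbation_derivative :
  exists l, is_derive L a0 l /\ Rabs l <= 2 * c * q * Ig.
Proof.
  assert (Hc : 0 <= c) by (eapply Rle_trans; [apply Rabs_pos | apply (D0_bounded 0)]).
  set (G := fun x => 2 * D0 x * (q * d x)).
  destruct (dominated_integrable G (fun x => 2 * c * q * g x) (scal (2 * c * q) Ig))
    as [l [Hl Hlb]].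
  - apply continuous_on_R_mult; [apply continuous_on_R_mult; auto using continuous_on_R_const |].
    apply continuous_on_R_mult; auto using continuous_on_R_const.
  - apply continuous_on_R_mult; auto using continuous_on_R_const.
  - intros x. unfold G. rewrite !Rabs_mult, (Rabs_right 2), (Rabs_right q) by lra.
    pose proof (D0_bounded x). pose proof (d_dominated x).
    pose proof (Rabs_pos (D0 x)). pose proof (Rabs_pos (d x)).
    assert (0 <= q * Rabs (d x)) by nra. assert (0 <= c * q) by nra.
    apply Rle_trans with (2 * c * (q * Rabs (d x))); [apply Rmult_le_compat_r; lra | nra].
  - exact (is_RInt_gen_scal (V := R_NormedModule) _ _ _ g_integral).
  - exists l. split; [| exact Hlb].
    apply (is_derive_RInt_gen (fun a x => (D0 x + q * u a x) ^ 2) L G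
             (fun x => (B ^ 2 + 2 * c * B') * e x) a0 delta l (scal (B ^ 2 + 2 * c * B') Ie));
      auto.
    + exact (is_RInt_gen_scal (V := R_NormedModule) _ _ _ e_integral).
    + intros a x Ha. rewrite u_at_a0, Rmult_0_r, Rplus_0_r.
      apply square_expansion_bound; auto.
Qed.

End ComponentPerturbation.

Lemma mixture_component_derivative n p mu sigma n' p' mu' sigma' j
    (u : R -> R -> R) (d g L : R -> R) a0 delta m r B B' Ig :
  is_gmixture n p mu sigma -> is_gmixture n' p' mu' sigma' -> (j < n)%nat ->
  0 < delta -> 0 < r -> 0 <= B -> 0 <= B' ->
  continuous_on_R d -> continuous_on_R g -> (forall x, Rabs (d x) <= g x) ->
  is_RInt_gen g minus_infty plus_infty Ig ->
  (forall a, Rabs (a - a0) < delta -> exists mu_a sigma_a,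
     is_gmixture n p mu_a sigma_a /\ L a = cramer2_sq n p mu_a sigma_a n' p' mu' sigma' /\
     forall x, mixture_cdf n p mu_a sigma_a x = mixture_cdf n p mu sigma x + p j * u a x) ->
  (forall x, u a0 x = 0) ->
  (forall a x, Rabs (a - a0) < delta -> Rabs (u a x) <= Rabs (a - a0) * B * laplace m r x) ->
  (forall a x, Rabs (a - a0) < delta ->
     Rabs (u a x - (a - a0) * d x) <= (a - a0) ^ 2 * B' * laplace m r x) ->
  exists l, is_derive L a0 l /\ Rabs l <= 2 * phi_mass * p j * Ig.
Proof.
  intros H1 H2 Hj Hdelta Hr HB HB' Hd Hg Hdg HIg Hfamily Hu0 Hu1 Hu2.
  apply (component_perturbation_derivative
           (fun x => mixture_cdf n p mu sigma x - mixture_cdf n' p' mu' sigma' x)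
           d g (laplace m r) u L a0 delta (p j) phi_mass B B' Ig (2 * r)); auto.
  - apply continuous_on_R_minus; apply mixture_cdf_continuous.
  - intros x. pose proof (mixture_cdf_bounds n p mu sigma x H1).
    pose proof (mixture_cdf_bounds n' p' mu' sigma' x H2). apply Rabs_le. lra.
  - apply (weight_bounds _ _ _ _ _ H1 Hj).
  - intros x. pose proof (laplace_bounds m r x Hr). lra.
  - apply laplace_integral, Hr.
  - intros a Ha. destruct (Hfamily a Ha) as [mu_a [sigma_a [Hmix [-> Hcdf]]]].
    apply cramer_perturbation_integral; auto.
Qed.

(* ∂L/∂μ_j = ∫ 2 D p_j (-φ(w)/σ_j), bounded by 2 φ_mass² <= 4. *)
Lemma mean_partial_derivative n p mu sigma n' p' mu' sigma' j :
  is_gmixture n p mu sigma -> is_gmixture n' p' mu' sigma' -> (j < n)%nat ->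
  exists l, is_derive (fun a => cramer2_sq n p (upd mu j a) sigma n' p' mu' sigma') (mu j) l /\
            Rabs l <= 4.
Proof.
  intros H1 H2 Hj.
  assert (Hs : 0 < sigma j) by (destruct H1 as [_ [_ H]]; auto).
  pose proof (weight_bounds _ _ _ _ _ H1 Hj). pose proof phi_mass_bounds.
  set (m := mu j) in *. set (s := sigma j) in *.
  destruct (mixture_component_derivative n p mu sigma n' p' mu' sigma' j
              (fun a x => Phi ((x - a) / s) - Phi ((x - m) / s))
              (fun x => - phi ((x - m) / s) / s) (fun x => phi ((x - m) / s) / s)
              (fun a => cramer2_sq n p (upd mu j a) sigma n' p' mu' sigma')
              m (s / 3) m (3 * s) (1000 / s) (1000 / s ^ 2) phi_mass)
    as [l [Hl Hlb]]; auto; try lra.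
  - apply Rdiv_le_0_compat; lra.
  - apply Rdiv_le_0_compat; [lra | apply pow_lt; lra].
  - apply (continuous_on_R_ext (fun x => phi ((x - m) / s) * (- / s))); [intros; field; lra |].
    apply continuous_on_R_mult; [apply phi_affine_continuous | apply continuous_on_R_const].
  - apply (continuous_on_R_ext (fun x => phi ((x - m) / s) * / s)); [reflexivity |].
    apply continuous_on_R_mult; [apply phi_affine_continuous | apply continuous_on_R_const].
  - intros x. rewrite Rabs_div, Rabs_Ropp, !Rabs_right by (lra || (left; apply phi_pos)).
    right; reflexivity.
  - apply phi_affine_integral, Hs.
  - intros a _. exists (upd mu j a), sigma.
    split; [apply is_gmixture_upd_mean, H1 | split; [reflexivity |]].
    intros x. apply mixture_cdf_upd_mean, Hj.
  - intros x. ring.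
  - intros a x Ha. apply (Phi_shift_bounds m s a x Hs Ha).
  - intros a x Ha. apply (Phi_shift_bounds m s a x Hs Ha).
  - exists l. split; [exact Hl |]. eapply Rle_trans; [exact Hlb | nra].
Qed.

(* ∂L/∂σ_j = ∫ 2 D p_j (-w φ(w)/σ_j), bounded by 4 φ_mass φ(0) <= 4. *)
Lemma scale_partial_derivative n p mu sigma n' p' mu' sigma' j :
  is_gmixture n p mu sigma -> is_gmixture n' p' mu' sigma' -> (j < n)%nat ->
  exists l, is_derive (fun s => cramer2_sq n p mu (upd sigma j s) n' p' mu' sigma') (sigma j) l /\
            Rabs l <= 4.
Proof.
  intros H1 H2 Hj.
  assert (Hs : 0 < sigma j) by (destruct H1 as [_ [_ H]]; auto).
  pose proof (weight_bounds _ _ _ _ _ H1 Hj). pose proof phi_mass_bounds.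
  pose proof (phi_le_half 0). pose proof (phi_pos 0).
  set (m := mu j) in *. set (s0 := sigma j) in *.
  destruct (mixture_component_derivative n p mu sigma n' p' mu' sigma' j
              (fun s x => Phi ((x - m) / s) - Phi ((x - m) / s0))
              (fun x => - ((x - m) / s0) * phi ((x - m) / s0) / s0)
              (fun x => Rabs ((x - m) / s0) * phi ((x - m) / s0) / s0)
              (fun s => cramer2_sq n p mu (upd sigma j s) n' p' mu' sigma')
              s0 (s0 / 4) m (3 * s0) (2000 / s0) (6000 / s0 ^ 2) (2 * phi 0))
    as [l [Hl Hlb]]; auto; try lra.
  - apply Rdiv_le_0_compat; lra.
  - apply Rdiv_le_0_compat; [lra | apply pow_lt; lra].
  - apply (continuous_on_R_ext (fun x => (x - m) / s0 * phi ((x - m) / s0) * (- / s0)));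
      [intros; field; lra |].
    apply continuous_on_R_mult; [| apply continuous_on_R_const].
    apply continuous_on_R_mult; [apply continuous_on_R_affine | apply phi_affine_continuous].
  - apply (continuous_on_R_ext (fun x => Rabs ((x - m) / s0) * phi ((x - m) / s0) * / s0));
      [reflexivity |].
    apply continuous_on_R_mult; [| apply continuous_on_R_const].
    apply continuous_on_R_mult;
      [apply continuous_on_R_abs, continuous_on_R_affine | apply phi_affine_continuous].
  - intros x. rewrite Rabs_div, Rabs_mult, Rabs_Ropp, (Rabs_right (phi _)), (Rabs_right s0)
      by (lra || (left; apply phi_pos)). right; reflexivity.
  - apply abs_moment_integral, Hs.
  - intros s Hds. exists mu, (upd sigma j s).
    split; [apply is_gmixture_upd_scale; [exact H1 | apply Rabs_def2 in Hds; lra] |].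
    split; [reflexivity |]. intros x. apply mixture_cdf_upd_scale, Hj.
  - intros x. ring.
  - intros s x Hds. apply (Phi_scale_bounds m s0 s x Hs Hds).
  - intros s x Hds. apply (Phi_scale_bounds m s0 s x Hs Hds).
  - exists l. split; [exact Hl |]. eapply Rle_trans; [exact Hlb |].
    assert (0 <= phi_mass * p j <= 2) by nra. nra.
Qed.

Lemma mean_partial_derivative_everywhere n p mu sigma n' p' mu' sigma' j t :
  is_gmixture n p mu sigma -> is_gmixture n' p' mu' sigma' -> (j < n)%nat ->
  exists l, is_derive (fun a => cramer2_sq n p (upd mu j a) sigma n' p' mu' sigma') t l /\
            Rabs l <= 4.
Proof.
  intros H1 H2 Hj.
  destruct (mean_partial_derivative n p (upd mu j t) sigma n' p' mu' sigma' j
              (is_gmixture_upd_mean _ _ _ _ _ _ H1) H2 Hj) as [l [Hl Hb]].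
  rewrite upd_same in Hl. exists l. split; auto.
  apply (is_derive_ext (fun a => cramer2_sq n p (upd (upd mu j t) j a) sigma n' p' mu' sigma'));
    auto.
  intros a. rewrite upd_upd. reflexivity.
Qed.

Lemma scale_partial_derivative_everywhere n p mu sigma n' p' mu' sigma' j t :
  is_gmixture n p mu sigma -> is_gmixture n' p' mu' sigma' -> (j < n)%nat -> 0 < t ->
  exists l, is_derive (fun s => cramer2_sq n p mu (upd sigma j s) n' p' mu' sigma') t l /\
            Rabs l <= 4.
Proof.
  intros H1 H2 Hj Ht.
  destruct (scale_partial_derivative n p mu (upd sigma j t) n' p' mu' sigma' j
              (is_gmixture_upd_scale _ _ _ _ _ _ H1 Ht) H2 Hj) as [l [Hl Hb]].
  rewrite upd_same in Hl. exists l. split; auto.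
  apply (is_derive_ext (fun s => cramer2_sq n p mu (upd (upd sigma j t) j s) n' p' mu' sigma'));
    auto.
  intros s. rewrite upd_upd. reflexivity.
Qed.

Theorem theorem3 (n : nat) (p mu sigma : nat -> R)
    (n' : nat) (p' mu' sigma' : nat -> R)
    (HG1 : is_gmixture n p mu sigma) (HG2 : is_gmixture n' p' mu' sigma')
    (j : nat) (Hj : (j < n)%nat) :
  (exists l, is_derive (fun m => cramer2_sq n p (upd mu j m) sigma n' p' mu' sigma')
                       (mu j) l /\ Rabs l <= 4) /\
  (exists l, is_derive (fun s => cramer2_sq n p mu (upd sigma j s) n' p' mu' sigma')
                       (sigma j) l /\ Rabs l <= 4) /\
  (forall a b : R,
     Rabs (cramer2_sq n p (upd mu j a) sigma n' p' mu' sigma'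
           - cramer2_sq n p (upd mu j b) sigma n' p' mu' sigma') <= 4 * Rabs (a - b)) /\
  (forall a b : R, 0 < a -> 0 < b ->
     Rabs (cramer2_sq n p mu (upd sigma j a) n' p' mu' sigma'
           - cramer2_sq n p mu (upd sigma j b) n' p' mu' sigma') <= 4 * Rabs (a - b)).
Proof.
  split; [| split; [| split]].
  - apply mean_partial_derivative; auto.
  - apply scale_partial_derivative; auto.
  - intros a b.
    apply (lipschitz_of_derivative_bound
             (fun m => cramer2_sq n p (upd mu j m) sigma n' p' mu' sigma')).
    intros t _. apply mean_partial_derivative_everywhere; auto.
  - intros a b Ha Hb.
    apply (lipschitz_of_derivative_bound
             (fun s => cramer2_sq n p mu (upd sigma j s) n' p' mu' sigma')).
    intros t Ht. apply scale_partial_derivative_everywhere; auto.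
    unfold Rmin in Ht; destruct Rle_dec; lra.
Qed.
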